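(* Let $F\subset\mathbb{R}^N$ be a self-similar fractal, i.e. the attractor (nonempty compact set with $F=\bigcup_{i=1}^m w_i(F)$) of a finite family of contracting similarities $w_1,\dots,w_m$ of $\mathbb{R}^N$. Let $w$ be one of the $w_i$ and let $x$ be its fixed point, $x=wx$. Then the tangent cone $\mathcal{T}_xF$ consists exactly of all dilations of $Z=\overline{\bigcup_{n\in\mathbb{N}}w^{-n}F}$, i.e. of the pointed metric spaces $(Z,x,c\,d)$, $c>0$, where $d$ is the Euclidean metric.
   Context: For a metric space $(X,d)$, $x\in X$ and $t>0$, $(X,x,td)$ denotes $X$ with metric $td$ and base point $x$. A tangent set of $X$ at $x$ is any limit point, as $t\to\infty$, of $(X,x,td)$ in the pointed Gromov–Hausdorff topology (on isometry classes of pointed proper metric spaces); the tangent cone $\mathcal{T}_xX$ is the family of all tangent sets of $X$ at $x$. *)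

From Stdlib Require Import Reals.
From mathcomp Require Import all_boot.
Set Implicit Arguments. Unset Strict Implicit. Unset Printing Implicit Defensive.
Local Open Scope R_scope.

Definition pt (N : nat) := 'I_N -> R.

Definition edist (N : nat) (x y : pt N) : R :=
  sqrt (\big[Rplus/0]_(i < N) ((x i - y i) ^ 2)).

Definition contracting_similarity (N : nat) (w : pt N -> pt N) : Prop :=
  exists r : R, 0 < r < 1 /\ forall x y, edist (w x) (w y) = r * edist x y.

Definition seq_compact (N : nat) (K : pt N -> Prop) : Prop :=
  forall u : nat -> pt N, (forall n, K (u n)) ->
    exists (phi : nat -> nat) (l : pt N),
      (forall n, (phi n < phi n.+1)%N) /\ K l /\
      forall eps, 0 < eps -> exists n0, forall n, (n0 <= n)%N ->
        edist (u (phi n)) l < eps.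

Definition is_attractor (N m : nat) (ws : 'I_m -> pt N -> pt N)
    (F : pt N -> Prop) : Prop :=
  (exists y, F y) /\ seq_compact F /\
  forall y, F y <-> exists (i : 'I_m) (z : pt N), F z /\ y = ws i z.

Definition eclosure (N : nat) (S : pt N -> Prop) : pt N -> Prop :=
  fun y => forall eps, 0 < eps -> exists z, S z /\ edist y z < eps.

(** Z = closure of the union over n of w^{-n} F  (w^{-n} F = preimage of F
    under the n-th iterate of w). *)
Definition Zset (N : nat) (w : pt N -> pt N) (F : pt N -> Prop) : pt N -> Prop :=
  eclosure (fun y => exists n : nat, F (iter n w y)).

Record metric_space := MetricSpace {
  msT :> Type;
  mdist : msT -> msT -> R;
  mdist_ge0 : forall a b, 0 <= mdist a b;
  mdist_eq0 : forall a b, mdist a b = 0 <-> a = b;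
  mdist_sym : forall a b, mdist a b = mdist b a;
  mdist_tri : forall a b c, mdist a c <= mdist a b + mdist b c
}.

Definition proper_space (Y : metric_space) : Prop :=
  forall (c : Y) (r : R) (u : nat -> Y), (forall n, mdist c (u n) <= r) ->
    exists (phi : nat -> nat) (l : Y),
      (forall n, (phi n < phi n.+1)%N) /\
      forall eps, 0 < eps -> exists n0, forall n, (n0 <= n)%N ->
        mdist (u (phi n)) l < eps.

(** Pointed Gromov-Hausdorff convergence (Burago-Burago-Ivanov, Def. 8.1.1)
    of the sequence of pointed metric spaces (S, p n, dn n), where S is a
    subset of a type A, to the pointed metric space (Y, q):
    for all r, eps > 0, for all large n there is f : B_r(p n) -> Y with
    f (p n) = q, distortion < eps, and B_{r-eps}(q) contained in the
    eps-neighbourhood of f(B_r(p n)). *)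
Definition pGH_conv (A : Type) (S : A -> Prop) (dn : nat -> A -> A -> R)
    (p : nat -> A) (Y : metric_space) (q : Y) : Prop :=
  forall r eps, 0 < r -> 0 < eps -> exists n0, forall n, (n0 <= n)%N ->
    exists f : A -> Y,
      f (p n) = q /\
      (forall a b, S a -> S b -> dn n (p n) a < r -> dn n (p n) b < r ->
         Rabs (mdist (f a) (f b) - dn n a b) < eps) /\
      (forall y : Y, mdist q y < r - eps ->
         exists a, S a /\ dn n (p n) a < r /\ mdist (f a) y < eps).

(** (Y, q) is a tangent set of F (with the Euclidean metric) at x: a limit
    point, as t -> oo, of (F, x, t d) in the pointed GH topology, i.e. the
    pGH limit of (F, x, t_n d) along some sequence t_n -> +oo. *)
Definition tangent_set (N : nat) (F : pt N -> Prop) (x : pt N)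
    (Y : metric_space) (q : Y) : Prop :=
  proper_space Y /\
  exists t : nat -> R,
    (forall M, exists n0, forall n, (n0 <= n)%N -> M < t n) /\
    pGH_conv F (fun n a b => t n * edist a b) (fun _ => x) q.

Definition pointed_isometric_to_dilation (N : nat) (Z : pt N -> Prop)
    (x : pt N) (c : R) (Y : metric_space) (q : Y) : Prop :=
  exists g : Y -> pt N,
    g q = x /\ (forall a, Z (g a)) /\ (forall z, Z z -> exists a, g a = z) /\
    forall a b, mdist a b = c * edist (g a) (g b).

(* Write t = s r^-k with 1 <= s < 1/r, where r is the ratio of w.  Since w^k is a
   similarity of ratio r^k fixing x, the map w^-k is an isometry from (F, x, t d) onto
   (w^-k F, x, s d), and the sets w^-k F increase to a dense subset of Z.

   If (Y, q) is isometric to (Z, x, c d), take t_n = c r^-n: then (F, x, t_n d) is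
   isometric to (w^-n F, x, c d), which sits inside (Y, q), and properness of Y makes
   the density of the w^-n F in Z uniform on balls.

   Conversely, along a free ultrafilter U on nat the normalised scales s_n converge to
   some c in [1, 1/r], and the approximate isometries given by pointed Gromov-Hausdorff
   convergence, transported by w^-k_n, have a U-limit g : Y -> Z which is a c-dilation
   onto Z.  Bounded sequences have U-limits both in R^N and in the proper space Y.

   The inverse w^-1 exists because, after normalisation, w is an isometry L of R^N
   with a fixed point, and such an L is onto: its image is closed, and the orbit of a
   point at distance del > 0 from the image is bounded yet del-separated, since
   d(L^i p, L^j p) = d(p, L (L^(j-i-1) p)) for i < j. *)

From HB Require Import structures.
From Stdlib Require Import Reals Lra Psatz ClassicalEpsilon FunctionalExtensionality.
From mathcomp Require Import all_boot.
From mathcomp Require Import boolp classical_sets filter.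
Local Open Scope R_scope.

Lemma Rplus_associative : associative Rplus.
Proof. by move=> a b c; rewrite Rplus_assoc. Qed.

HB.instance Definition _ :=
  Monoid.isComLaw.Build R 0 Rplus Rplus_associative Rplus_comm Rplus_0_l.

Section RealSums.
Context {n : nat}.
Implicit Types (F G : 'I_n -> R) (P : pred 'I_n).

Lemma sumR_ge0 P F : (forall i, 0 <= F i) -> 0 <= \big[Rplus/0]_(i < n | P i) F i.
Proof. by move=> F0; apply: big_ind => [|a b|i _]; [lra|lra|apply: F0]. Qed.

Lemma sumR_scale k F :
  \big[Rplus/0]_(i < n) (k * F i) = k * \big[Rplus/0]_(i < n) F i.
Proof. by rewrite (big_morph (Rmult k) (Rmult_plus_distr_l k) (Rmult_0_r k)). Qed.

Lemma term_le_sumR F j : (forall i, 0 <= F i) -> F j <= \big[Rplus/0]_(i < n) F i.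
Proof.
move=> F0; rewrite (bigD1 j) //= -{1}(Rplus_0_r (F j)).
by apply: Rplus_le_compat_l; apply: sumR_ge0.
Qed.

Lemma sumR_sq_eq0 F : \big[Rplus/0]_(i < n) F i ^ 2 = 0 -> forall i, F i = 0.
Proof.
move=> F0 i; have := term_le_sumR (fun i => F i ^ 2) i; rewrite F0.
by move=> /(_ (fun i => pow2_ge_0 (F i))); nra.
Qed.

Lemma cauchy_schwarz F G :
  \big[Rplus/0]_(i < n) (F i * G i) <=
  sqrt (\big[Rplus/0]_(i < n) F i ^ 2) * sqrt (\big[Rplus/0]_(i < n) G i ^ 2).
Proof.
set SF := \big[Rplus/0]_(i < n) F i ^ 2; set SG := \big[Rplus/0]_(i < n) G i ^ 2.
have SF0 : 0 <= SF by apply: sumR_ge0 => i; apply: pow2_ge_0.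
have SG0 : 0 <= SG by apply: sumR_ge0 => i; apply: pow2_ge_0.
have [A0 eA] := (sqrt_pos SF, sqrt_sqrt SF SF0).
have [B0 eB] := (sqrt_pos SG, sqrt_sqrt SG SG0).
set A := sqrt SF in A0 eA *; set B := sqrt SG in B0 eB *.
have [AB0|ABpos] : A * B = 0 \/ 0 < A * B by nra.
  have FG0 : (forall i, F i = 0) \/ (forall i, G i = 0).
    case: (Rmult_integral _ _ AB0) => [A00|B00]; [left|right]; apply: sumR_sq_eq0.
      by rewrite -/SF -eA A00 Rmult_0_l.
    by rewrite -/SG -eB B00 Rmult_0_l.
  rewrite AB0 big1; first exact: Rle_refl.
  by move=> i _; case: FG0 => ->; rewrite ?Rmult_0_l ?Rmult_0_r.
(* 0 <= sum (B F_i - A G_i)^2 = 2 A^2 B^2 - 2 A B sum F_i G_i *)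
have : 0 <= \big[Rplus/0]_(i < n) (B * F i - A * G i) ^ 2.
  by apply: sumR_ge0 => i; apply: pow2_ge_0.
have -> : \big[Rplus/0]_(i < n) (B * F i - A * G i) ^ 2 =
    \big[Rplus/0]_(i < n) (B ^ 2 * F i ^ 2 + A ^ 2 * G i ^ 2 + (-2 * A * B) * (F i * G i)).
  by apply: eq_bigr => i _; ring.
rewrite !big_split /= !sumR_scale -/SF -/SG -eA -eB -/(\big[Rplus/0]_(i < n) (F i * G i)); nra.
Qed.

End RealSums.

Lemma sumR_le_const n (F : 'I_n -> R) d :
  (forall i, F i <= d) -> \big[Rplus/0]_(i < n) F i <= INR n * d.
Proof.
elim: n F => [|m IH] F Fd; first by rewrite big_ord0 /=; lra.
rewrite big_ord_recr S_INR /=.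
apply: Rle_trans (Rplus_le_compat _ _ _ _ (IH _ (fun i => Fd _)) (Fd ord_max)) _; lra.
Qed.

Definition sqdist {N} (a b : pt N) : R := \big[Rplus/0]_(i < N) (a i - b i) ^ 2.

Section Euclidean.
Context {N : nat}.
Implicit Types a b c o : pt N.

Lemma sqdist_ge0 a b : 0 <= sqdist a b.
Proof. by apply: sumR_ge0 => i; apply: pow2_ge_0. Qed.

Lemma edist_ge0 a b : 0 <= edist a b.
Proof. exact: sqrt_pos. Qed.

Lemma edist_xx a : edist a a = 0.
Proof.
rewrite /edist big1; first exact: sqrt_0.
by move=> i _; rewrite Rminus_diag; ring.
Qed.

Lemma edist_sym a b : edist a b = edist b a.
Proof. by rewrite /edist; congr sqrt; apply: eq_bigr => i _; ring. Qed.

Lemma coord_le_edist a b i : Rabs (a i - b i) <= edist a b.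
Proof.
rewrite -sqrt_Rsqr_abs; apply: sqrt_le_1_alt; rewrite Rsqr_pow2.
exact: (term_le_sumR (fun i => (a i - b i) ^ 2) i (fun i => pow2_ge_0 _)).
Qed.

Lemma edist_eq0 a b : edist a b = 0 -> a = b.
Proof.
move=> ab0; apply: functional_extensionality => i; apply: cond_eq => eps eps0.
by have := coord_le_edist a b i; rewrite ab0; lra.
Qed.

Lemma edist_le_coord a b d :
  (forall i, Rabs (a i - b i) <= d) -> 0 <= d -> edist a b <= sqrt (INR N) * d.
Proof.
move=> abd d0; rewrite -(sqrt_pow2 d d0) -sqrt_mult_alt; last exact: pos_INR.
apply: sqrt_le_1_alt; apply: sumR_le_const => i.
by have := abd i; have := Rabs_pos (a i - b i); rewrite -(pow2_abs (a i - b i)); nra.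
Qed.

Lemma edist_triangle a b c : edist a c <= edist a b + edist b c.
Proof.
have [ab0 bc0] := (edist_ge0 a b, edist_ge0 b c).
have eab : edist a b ^ 2 = sqdist a b := pow2_sqrt _ (sqdist_ge0 a b).
have ebc : edist b c ^ 2 = sqdist b c := pow2_sqrt _ (sqdist_ge0 b c).
rewrite -[_ + _]sqrt_pow2; last lra.
apply: sqrt_le_1_alt; change (sqdist a c <= (edist a b + edist b c) ^ 2).
have -> : sqdist a c = sqdist a b + sqdist b c +
    2 * \big[Rplus/0]_(i < N) ((a i - b i) * (b i - c i)).
  rewrite -sumR_scale -!big_split /=; apply: eq_bigr => i _; ring.
have := cauchy_schwarz (fun i => a i - b i) (fun i => b i - c i).
rewrite -/(sqdist a b) -/(sqdist b c) -/(edist a b) -/(edist b c); nra.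
Qed.

Lemma edist_triangle4 a b c d :
  edist a d <= edist a b + edist b c + edist c d.
Proof. by have := edist_triangle a b d; have := edist_triangle b c d; lra. Qed.

Definition homothety (o : pt N) (lam : R) (a : pt N) : pt N :=
  fun i => o i + lam * (a i - o i).

Lemma edist_homothety o lam a b : 0 <= lam ->
  edist (homothety o lam a) (homothety o lam b) = lam * edist a b.
Proof.
move=> lam0; have -> : lam * edist a b = sqrt (lam ^ 2 * sqdist a b).
  by rewrite sqrt_mult_alt ?sqrt_pow2 //; apply: pow2_ge_0.
by rewrite /edist; congr sqrt; rewrite -sumR_scale; apply: eq_bigr => i _; rewrite /homothety; ring.
Qed.

Lemma homothety_center o lam : homothety o lam o = o.
Proof. by apply: functional_extensionality => i; rewrite /homothety; ring. Qed.

Lemma homothetyK o lam : lam <> 0 -> cancel (homothety o (/ lam)) (homothety o lam).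
Proof.
by move=> lam0 a; apply: functional_extensionality => i; rewrite /homothety; field.
Qed.

End Euclidean.

Lemma geometric_small r C eps : 0 <= r < 1 -> 0 <= C -> 0 < eps ->
  exists K, forall n, (K <= n)%N -> r ^ n * C < eps.
Proof.
move=> r01 C0 eps0; have Ceps : 0 < eps / (C + 1) by apply: Rdiv_lt_0_compat; lra.
have [K rK] := pow_lt_1_zero r ltac:(rewrite Rabs_pos_eq; lra) _ Ceps.
exists K => n /leP /rK; rewrite Rabs_pos_eq; last by apply: pow_le; lra.
move=> rn; have : r ^ n * (C + 1) < eps.
  have := Rmult_lt_compat_r (C + 1) _ _ ltac:(lra) rn.
  by rewrite /Rdiv Rmult_assoc Rinv_l; lra.
by have := pow_le r n ltac:(lra); nra.
Qed.

Lemma geometric_unbounded r c : 0 < r < 1 -> 0 < c ->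
  forall M, exists K, forall n, (K <= n)%N -> M < c * (/ r) ^ n.
Proof.
move=> r01 c0 M; have r01' : 0 <= r < 1 by lra.
have [K rK] := geometric_small _ _ _ r01' (Rabs_pos M) c0.
exists K => n /rK rM; have rn0 : 0 < r ^ n by apply: pow_lt; lra.
rewrite pow_inv; apply: (Rmult_lt_reg_r (r ^ n)) => //.
by rewrite Rmult_assoc Rinv_l; [have := Rle_abs M; nra | lra].
Qed.

Lemma strict_mono_ge (phi : nat -> nat) :
  (forall n, (phi n < phi n.+1)%N) -> forall n, (n <= phi n)%N.
Proof. by move=> phiS; elim=> [|n IH] //; apply: leq_ltn_trans IH (phiS n). Qed.

Lemma inv_INR_small eps : 0 < eps -> exists K, forall k, (K <= k)%N -> / INR k.+1 < eps.
Proof.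
move=> eps0; have [K [Keps K0]] := archimed_cor1 eps eps0.
exists K => k Kk; apply: Rle_lt_trans Keps; apply: Rinv_le_contravar; first exact: lt_0_INR.
by apply: le_INR; apply/leP; apply: leq_trans Kk _.
Qed.

Lemma inv_INR_le1 k : / INR k.+1 <= 1.
Proof.
rewrite -Rinv_1; apply: Rinv_le_contravar; first lra.
by rewrite S_INR; have := pos_INR k; lra.
Qed.

Lemma mdist_tri4 {Y : metric_space} (a b c d : Y) :
  mdist a d <= mdist a b + mdist b c + mdist c d.
Proof. by have := mdist_tri a b d; have := mdist_tri b c d; lra. Qed.

Section ProperSpace.
Context {Y : metric_space} (HY : proper_space Y).

Lemma proper_not_separated (u : nat -> Y) c M eps : (forall n, mdist c (u n) <= M) ->
  0 < eps -> ~ (forall i k, (i < k)%N -> eps <= mdist (u k) (u i)).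
Proof.
move=> uM eps0 sep; have [phi [l [phiS ul]]] := HY c M u uM.
have [n0 n0l] := ul (eps / 2) ltac:(lra).
have := sep _ _ (phiS n0); have := n0l n0 (leqnn _); have := n0l n0.+1 (leqnSn _).
have := mdist_tri (u (phi n0.+1)) l (u (phi n0)); rewrite (mdist_sym l); lra.
Qed.

End ProperSpace.

Fixpoint max_upto (P : nat -> Prop) (m : nat) : nat :=
  if m is m'.+1 then (if pselect (P m) then m else max_upto P m') else 0%N.

Lemma max_uptoP (P : nat -> Prop) m j :
  (j <= m)%N -> P j -> (j <= max_upto P m)%N /\ P (max_upto P m).
Proof.
elim: m => [|m IH] jm Pj /=; first by move: jm; rewrite leqn0 => /eqP jm; subst j.
destruct (pselect (P m.+1)) as [Pm|nPm]; first by [].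
rewrite leq_eqVlt ltnS in jm; case/orP: jm => [/eqP jm|jm]; last exact: IH.
by subst j; case: nPm.
Qed.

Definition ucvg (U : set_system nat) {T} (d : T -> T -> R) (u : nat -> T) (l : T) : Prop :=
  forall eps, 0 < eps -> \forall n \near U, d (u n) l < eps.

Section Ultralimits.
Context {U : set_system nat} (U_ultra : UltraFilter U)
  (U_free : forall j, \forall n \near U, (j <= n)%N).

Lemma near_eventually (P : nat -> Prop) :
  (exists n0, forall n, (n0 <= n)%N -> P n) -> \forall n \near U, P n.
Proof. by case=> n0 Pn; apply: filterS (U_free n0). Qed.

Lemma near_not (P : nat -> Prop) :
  ~ (\forall n \near U, P n) -> \forall n \near U, ~ P n.
Proof. by case: (in_ultra_setVsetC P U_ultra). Qed.

Lemma near_diagonal (P : nat -> nat -> Prop) :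
  (forall j, \forall n \near U, P n j) ->
  exists J : nat -> nat, forall j, \forall n \near U, (j <= J n)%N /\ P n (J n).
Proof.
move=> PU; exists (fun n => max_upto (P n) n) => j.
by apply: filterS2 (U_free j) (PU j) => n; apply: max_uptoP.
Qed.

Lemma ucvg_real (u : nat -> R) M : (\forall n \near U, Rabs (u n) <= M) ->
  exists l, ucvg U (fun a b => Rabs (a - b)) u l.
Proof.
move=> uM; pose E a := \forall n \near U, a <= u n.
have E_bound : bound E.
  exists M => a Ea; apply: Rnot_lt_le => Ma.
  have [n [an unM]] := filter_ex (filterI Ea uM).
  by have := Rle_abs (u n); lra.
have E_ne : exists a, E a.
  by exists (- M); apply: filterS uM => n; have := Rle_abs (- u n); rewrite Rabs_Ropp; lra.
have [l [l_ub l_lub]] := completeness E E_bound E_ne.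
exists l => eps eps0.
have lower : \forall n \near U, l - eps < u n.
  have [a [Ea lea]] : exists a, E a /\ l - eps < a.
    apply: NNPP => noa; suff : l <= l - eps by lra.
    by apply: l_lub => a Ea; apply: Rnot_lt_le => lta; apply: noa; exists a.
  by apply: filterS Ea => n; lra.
have upper : \forall n \near U, u n < l + eps.
  have : ~ E (l + eps / 2) by move=> /l_ub; lra.
  by move/near_not; apply: filterS => n; lra.
by apply: filterS2 lower upper => n *; apply: Rabs_def1; lra.
Qed.

Lemma ucvg_euclidean {N} (u : nat -> pt N) c M : (\forall n \near U, edist c (u n) <= M) ->
  exists l, ucvg U (@edist N) u l.
Proof.
move=> uM.
have coord i : exists li, ucvg U (fun a b => Rabs (a - b)) (fun n => u n i) li.
  apply: (ucvg_real _ (Rabs (c i) + M)); apply: filterS uM => n cuM.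
  have := coord_le_edist c (u n) i; have := Rabs_triang_inv (u n i) (c i).
  rewrite Rabs_minus_sym; lra.
have [l ul] := choice coord; exists l => eps eps0.
have sN := sqrt_pos (INR N); pose d := eps / (sqrt (INR N) + 1).
have d0 : 0 < d by apply: Rdiv_lt_0_compat; lra.
have Nd : sqrt (INR N) * d < eps.
  by rewrite /d; apply: (Rmult_lt_reg_r (sqrt (INR N) + 1)); [lra | field_simplify; lra].
apply: filterS (filter_forall _ (fun i => ul i d d0)) => n uld.
by apply: Rle_lt_trans Nd; apply: edist_le_coord => [i|]; [apply: Rlt_le; apply: uld | lra].
Qed.

Lemma ucvg_edist_eq {N} {u v : nat -> pt N} {l l'} :
  ucvg U (@edist N) u l -> ucvg U (@edist N) v l' ->
  (forall del, 0 < del -> \forall n \near U, edist (u n) (v n) < del) -> l = l'.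
Proof.
move=> ul vl' uv; apply: edist_eq0; apply: cond_eq => eps eps0.
rewrite Rminus_0_r Rabs_pos_eq; last exact: edist_ge0.
have eps3 : 0 < eps / 3 by lra.
have [n [[unl vnl] uvn]] := filter_ex (filterI (filterI (ul _ eps3) (vl' _ eps3)) (uv _ eps3)).
by have := edist_triangle4 l (u n) (v n) l'; rewrite (edist_sym l (u n)); lra.
Qed.

Section ProperUltralimit.
Context {Y : metric_space} (HY : proper_space Y).

Lemma proper_near_net (u : nat -> Y) c M : (forall n, mdist c (u n) <= M) ->
  forall eps, 0 < eps -> exists m, \forall n \near U, mdist (u n) (u m) < eps.
Proof.
move=> uM eps eps0; apply: NNPP => nonet.
have far m : \forall n \near U, eps <= mdist (u n) (u m).
  apply: filterS (near_not (fun n => mdist (u n) (u m) < eps) _) => [n|]; first lra.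
  by move=> um; apply: nonet; exists m.
have next (s : seq nat) : exists n, forall m, m \in s -> eps <= mdist (u n) (u m).
  apply: (@filter_ex _ U); elim: s => [|m s IH]; first by apply: filterE.
  apply: filterS2 (far m) IH => n farm fars k.
  by rewrite in_cons => /orP [/eqP -> | /fars].
have [nx nxP] := choice next.
pose prefix k := iter k (fun s => nx s :: s) [::].
have prefix_mem i k : (i < k)%N -> nx (prefix i) \in prefix k.
  elim: k => [|k IH] //; rewrite ltnS leq_eqVlt => /orP [/eqP -> | ik].
    by rewrite /= mem_head.
  by rewrite /= in_cons (IH ik) orbT.
apply: (proper_not_separated HY (fun k => u (nx (prefix k))) c M eps) => // i k ik.
exact: nxP (prefix_mem _ _ ik).
Qed.

Lemma ucvg_proper (u : nat -> Y) c M : (\forall n \near U, mdist c (u n) <= M) ->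
  exists l, ucvg U (@mdist Y) u l.
Proof.
move=> uM; have M0 : 0 <= M.
  by have [n cuM] := filter_ex uM; have := mdist_ge0 c (u n); lra.
pose v n := if Rle_dec (mdist c (u n)) M then u n else c.
have vM n : mdist c (v n) <= M.
  rewrite /v; destruct (Rle_dec (mdist c (u n)) M) => //.
  by rewrite (proj2 (mdist_eq0 c c) erefl).
have uv : \forall n \near U, u n = v n.
  by apply: filterS uM => n cuM; rewrite /v; destruct (Rle_dec (mdist c (u n)) M).
have centre k : exists m, \forall n \near U, mdist (v n) (v m) < / INR k.+1.
  by apply: (proper_near_net _ _ _ vM); apply: Rinv_0_lt_compat; apply: lt_0_INR; lia.
have [m mP] := choice centre.
have [phi [l [phiS ml]]] := HY c M (fun k => v (m k)) (fun k => vM _).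
exists l => eps eps0.
have [K1 K1l] := ml (eps / 2) ltac:(lra).
have [K2 K2inv] := inv_INR_small (eps / 2) ltac:(lra).
pose k := maxn K1 K2.
have vml := K1l k (leq_maxl _ _).
have inv := K2inv (phi k) (leq_trans (leq_maxr K1 K2) (strict_mono_ge _ phiS k)).
apply: filterS2 uv (mP (phi k)) => n -> vnm.
by have := mdist_tri (v n) (v (m (phi k))) l; lra.
Qed.

End ProperUltralimit.

Section Isometry.
Context {N : nat} {L : pt N -> pt N} (L_iso : forall a b, edist (L a) (L b) = edist a b).

Lemma isometry_image_closed p :
  (forall eps, 0 < eps -> exists z, edist (L z) p < eps) -> exists z, L z = p.
Proof.
move=> near_p; have approx k : exists z, edist (L z) p < / INR k.+1.
  by apply: near_p; apply: Rinv_0_lt_compat; apply: lt_0_INR; lia.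
have [z zP] := choice approx.
have [y zy] : exists y, ucvg U (@edist N) z y.
  apply: (ucvg_euclidean z (z 0%N) (edist (L (z 0%N)) p + 1)).
  apply: filterE => k; rewrite -L_iso.
  have := edist_triangle (L (z 0%N)) p (L (z k)); have := zP k; have := inv_INR_le1 k.
  by rewrite (edist_sym p); lra.
exists y; apply: edist_eq0; apply: cond_eq => eps eps0.
rewrite Rminus_0_r Rabs_pos_eq; last exact: edist_ge0.
have eps2 : 0 < eps / 2 by lra.
have [K Kinv] := inv_INR_small _ eps2.
have [k [zky Kk]] := filter_ex (filterI (zy _ eps2) (U_free K)).
have := edist_triangle (L y) (L (z k)) p; rewrite L_iso (edist_sym y).
by have := zP k; have := Kinv k Kk; lra.
Qed.

Lemma isometry_surjective x : L x = x -> forall p, exists z, L z = p.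
Proof.
move=> Lx p; apply: NNPP => notimg.
have [del [del0 far]] : exists del, 0 < del /\ forall z, del <= edist (L z) p.
  apply: NNPP => nofar; apply: notimg; apply: isometry_image_closed => eps eps0.
  apply: NNPP => nonear; apply: nofar; exists eps; split => // z.
  by apply: Rnot_lt_le => zp; apply: nonear; exists z.
have orbit_bounded : \forall n \near U, edist x (iter n L p) <= edist x p.
  apply: filterE => n; rewrite -{1}(iter_fix n Lx).
  by elim: n => [|n IH] /=; [lra | rewrite L_iso].
have [l orbit_l] := ucvg_euclidean _ _ _ orbit_bounded.
have close := orbit_l (del / 2) ltac:(lra).
have [i li] := filter_ex close.
have [j [lj ij]] := filter_ex (filterI close (U_free i.+1)).
have iso_iter m a b : edist (iter m L a) (iter m L b) = edist a b.
  by elim: m => [|m IH] //=; rewrite L_iso.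
have := far (iter (j - i.+1) L p); rewrite -(iso_iter i) -iterS -iterD.
rewrite addnS -addSn subnKC // => farj.
by have := edist_triangle (iter i L p) l (iter j L p); rewrite (edist_sym l) edist_sym; lra.
Qed.

End Isometry.

End Ultralimits.

Lemma iter_surjective {T} (f : T -> T) : (forall p, exists z, f z = p) ->
  forall n p, exists z, iter n f z = p.
Proof.
move=> f_onto; elim=> [|n IH] p; first by exists p.
by have [y <-] := f_onto p; have [z <-] := IH y; exists z; rewrite -iterS iterSr.
Qed.

Lemma iter_invariant {T} {F : T -> Prop} {f : T -> T} : (forall z, F z -> F (f z)) ->
  forall m n z, (m <= n)%N -> F (iter m f z) -> F (iter n f z).
Proof.
move=> Ff m n z mn; rewrite -(subnK mn) iterD.
by elim: (n - m)%N => [|k IH] //= /IH; apply: Ff.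
Qed.

Section Similarity.
Context {N : nat} {w : pt N -> pt N} {r : R}.
Hypotheses (r_pos : 0 < r) (w_sim : forall a b, edist (w a) (w b) = r * edist a b).

Lemma edist_iter n a b : edist (iter n w a) (iter n w b) = r ^ n * edist a b.
Proof. by elim: n => [|n IH] /=; rewrite ?w_sim ?IH; ring. Qed.

Lemma iter_injective n : injective (iter n w).
Proof.
move=> a b ab; apply: edist_eq0; have := edist_iter n a b.
by rewrite ab edist_xx; have := pow_lt r n r_pos; have := edist_ge0 a b; nra.
Qed.

Lemma similarity_surjective {U} : UltraFilter U -> (forall j, \forall n \near U, (j <= n)%N) ->
  forall x, w x = x -> forall p, exists z, w z = p.
Proof.
move=> U_ultra U_free x wx p.
pose L a := homothety x (/ r) (w a).
have L_iso a b : edist (L a) (L b) = edist a b.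
  rewrite edist_homothety ?w_sim; [field | apply: Rlt_le; apply: Rinv_0_lt_compat]; lra.
have Lx : L x = x by rewrite /L wx homothety_center.
have [z Lz] := isometry_surjective U_ultra U_free L_iso _ Lx (homothety x (/ r) p).
have r0 : r <> 0 by lra.
by exists z; rewrite -(homothetyK x r r0 (w z)) -/(L z) Lz homothetyK.
Qed.

Lemma fixed_point_mem {F : pt N -> Prop} {x} : r < 1 -> w x = x ->
  (exists y, F y) -> seq_compact F -> (forall z, F z -> F (w z)) -> F x.
Proof.
move=> r1 wx [y Fy] F_cpt Fw.
have [phi [l [phiS [Fl ul]]]] :=
  F_cpt (fun n => iter n w y) (fun n => iter_invariant Fw 0 n y (leq0n n) Fy).
suff -> : x = l by [].
apply: edist_eq0; apply: cond_eq => eps eps0.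
rewrite Rminus_0_r Rabs_pos_eq; last exact: edist_ge0.
have eps2 : 0 < eps / 2 by lra.
have [K1 K1l] := ul _ eps2.
have [K2 K2r] := geometric_small _ _ _ (conj (Rlt_le _ _ r_pos) r1) (edist_ge0 x y) eps2.
have ynl := K1l _ (leq_maxl K1 K2).
set n := phi (maxn K1 K2) in ynl.
have rn := K2r n (leq_trans (leq_maxr K1 K2) (strict_mono_ge _ phiS _)).
have := edist_triangle x (iter n w y) l; rewrite -{2}(iter_fix n wx) edist_iter; lra.
Qed.

End Similarity.

Definition pGH_approx {A : Type} (S : A -> Prop) (d : A -> A -> R) (p : A)
    {Y : metric_space} (q : Y) (f : A -> Y) (rho eps : R) : Prop :=
  f p = q /\
  (forall a b, S a -> S b -> d p a < rho -> d p b < rho ->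
     Rabs (mdist (f a) (f b) - d a b) < eps) /\
  (forall y : Y, mdist q y < rho - eps ->
     exists a, S a /\ d p a < rho /\ mdist (f a) y < eps).

Lemma pGH_approx_base {A} {S : A -> Prop} {d p} {Y : metric_space} {q : Y} {f rho eps} a :
  pGH_approx S d p q f rho eps -> S p -> d p p = 0 -> 0 < rho -> S a -> d p a < rho ->
  Rabs (mdist q (f a) - d p a) < eps.
Proof. by move=> [fp [fd _]] Sp dpp rho0 Sa pa; rewrite -fp; apply: fd; rewrite ?dpp. Qed.

Lemma pGH_approx_pullback {A B} (h : B -> A) {S : A -> Prop} {d p'} {Y : metric_space} {q : Y}
    {f rho eps} : (forall a, S a -> exists b, h b = a) ->
  pGH_approx S d (h p') q f rho eps ->
  pGH_approx (fun b => S (h b)) (fun b b' => d (h b) (h b')) p' q (fun b => f (h b)) rho eps.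
Proof.
move=> h_onto [fp [fd fc]]; split; [exact: fp | split; first by move=> a b; apply: fd].
by move=> y /fc [a [Sa [pa fay]]]; have [b hb] := h_onto a Sa; exists b; rewrite hb.
Qed.

Section Diagonal.
Context {U : set_system nat} (U_ultra : UltraFilter U)
  (U_free : forall j, \forall n \near U, (j <= n)%N).

Lemma pGH_conv_diagonal {A} {S : A -> Prop} {dn p} {Y : metric_space} {q : Y} :
  pGH_conv S dn p q ->
  exists (rho eps : nat -> R) (f : nat -> A -> Y),
    (forall M, \forall n \near U, M < rho n) /\
    (forall del, 0 < del -> \forall n \near U, eps n < del) /\
    \forall n \near U, pGH_approx S (dn n) (p n) q (f n) (rho n) (eps n).
Proof.
move=> conv; pose P n j := exists f, pGH_approx S (dn n) (p n) q f (INR j.+1) (/ INR j.+1).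
have [J JP] : exists J : nat -> nat, forall j, \forall n \near U, (j <= J n)%N /\ P n (J n).
  apply: (near_diagonal U_ultra U_free) => j; apply: (near_eventually U_ultra U_free).
  by apply: conv; [apply: lt_0_INR | apply: Rinv_0_lt_compat; apply: lt_0_INR]; lia.
have pick n : exists g : A -> Y, P n (J n) ->
    pGH_approx S (dn n) (p n) q g (INR (J n).+1) (/ INR (J n).+1).
  by case: (pselect (P n (J n))) => [[g gP]|nP]; [exists g | exists (fun _ => q)] => // /nP.
have [f fP] := choice pick.
exists (fun n => INR (J n).+1), (fun n => / INR (J n).+1), f; split; [|split].
- move=> M; have [j Mj] := INR_archimed 1 M Rlt_0_1.
  apply: filterS (JP j) => n [jJ _]; rewrite Rmult_1_r in Mj.
  by apply: Rlt_le_trans Mj _; apply: le_INR; apply/leP; apply: leq_trans jJ _.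
- move=> del del0; have [K Kinv] := inv_INR_small _ del0.
  by apply: filterS (JP K) => n [KJ _]; apply: Kinv.
- by apply: filterS (JP 0%N) => n [_ /fP].
Qed.

End Diagonal.

Section LimitMap.
Context {U : set_system nat} (U_ultra : UltraFilter U)
  (U_free : forall j, \forall n \near U, (j <= n)%N).
Context {N : nat} {Y : metric_space} (HY : proper_space Y) {x : pt N} {q : Y}.
Context {E : nat -> pt N -> Prop} {s rho eps : nat -> R} {c : R} {phi : nat -> pt N -> Y}.
Hypotheses (E_x : forall n, E n x) (s_ge1 : \forall n \near U, 1 <= s n)
  (s_to_c : ucvg U (fun a b => Rabs (a - b)) s c)
  (rho_big : forall M, \forall n \near U, M < rho n)
  (eps_small : forall del, 0 < del -> \forall n \near U, eps n < del)
  (phi_approx : \forall n \near U,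
     pGH_approx (E n) (fun a b => s n * edist a b) x q (phi n) (rho n) (eps n)).

Lemma scale_near_lim del : 0 < del -> \forall n \near U, c - del < s n < c + del.
Proof. by move=> del0; apply: filterS (s_to_c _ del0) => n /= /Rabs_def2; lra. Qed.

Lemma scale_lim_ge1 : 1 <= c.
Proof.
apply: Rnot_lt_le => c1; have [n [sn1 /Rabs_def2 snc]] :=
  filter_ex (filterI s_ge1 (s_to_c _ (Rlt_Rminus _ _ c1))).
lra.
Qed.

Lemma approx_base_dist {n} a :
  pGH_approx (E n) (fun a b => s n * edist a b) x q (phi n) (rho n) (eps n) ->
  0 < rho n -> E n a -> s n * edist x a < rho n ->
  Rabs (mdist q (phi n a) - s n * edist x a) < eps n.
Proof.
move=> approx rho0 Ea xa; apply: (pGH_approx_base a approx (E_x n)) => //.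
by rewrite /= edist_xx Rmult_0_r.
Qed.

(* Junk value [x] when there is no such point; only U-most n matter. *)
Definition approx_preim n y : pt N := epsilon (inhabits x)
  (fun a => E n a /\ s n * edist x a < rho n /\ mdist (phi n a) y < eps n).

Lemma approx_preimP y : \forall n \near U,
  E n (approx_preim n y) /\ s n * edist x (approx_preim n y) < rho n /\
  mdist (phi n (approx_preim n y)) y < eps n /\
  s n * edist x (approx_preim n y) < mdist q y + 2 * eps n.
Proof.
have rho_y := rho_big (mdist q y + 1).
apply: (filterS3 _ _ phi_approx rho_y (eps_small _ Rlt_0_1)) => n approx rhon eps1.
have rho0 : 0 < rho n by have := mdist_ge0 q y; lra.
have [_ [_ cover]] := approx.
have := epsilon_spec (inhabits x)
  (fun a => E n a /\ s n * edist x a < rho n /\ mdist (phi n a) y < eps n).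
rewrite -/(approx_preim n y) => /(_ (cover y _)) [|Ea [xa ay]]; first lra.
do 3 split => //; have /Rabs_def2 := approx_base_dist _ approx rho0 Ea xa.
by have := mdist_tri q y (phi n (approx_preim n y)); rewrite (mdist_sym y); lra.
Qed.

Lemma approx_preim_bounded y : \forall n \near U, edist x (approx_preim n y) <= mdist q y + 2.
Proof.
apply: (filterS3 _ _ (approx_preimP y) s_ge1 (eps_small _ Rlt_0_1)) => n [_ [_ [_ xa]]] sn1 eps1.
by have := edist_ge0 x (approx_preim n y); nra.
Qed.

Definition lim_map y : pt N :=
  epsilon (inhabits x) (ucvg U (@edist N) (fun n => approx_preim n y)).

Lemma lim_mapP y : ucvg U (@edist N) (fun n => approx_preim n y) (lim_map y).
Proof. by apply: epsilon_spec; apply: (ucvg_euclidean U_ultra _ _ _ (approx_preim_bounded y)). Qed.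

Lemma lim_map_base : lim_map q = x.
Proof.
apply: (ucvg_edist_eq U_ultra (lim_mapP q) (v := fun _ => x)) => [del del0|del del0].
  by apply: filterE => n; rewrite edist_xx.
have del2 : 0 < del / 2 by lra.
apply: (filterS3 _ _ (approx_preimP q) s_ge1 (eps_small _ del2)) => n [_ [_ [_ xa]]] sn1 epsn.
rewrite (proj2 (mdist_eq0 q q) erefl) edist_sym in xa.
by have := edist_ge0 x (approx_preim n q); nra.
Qed.

Lemma lim_map_dilation y y' : mdist y y' = c * edist (lim_map y) (lim_map y').
Proof.
apply: cond_eq => del del0.
pose M := mdist q y + mdist q y' + 4.
have M0 : 0 <= M by have := mdist_ge0 q y; have := mdist_ge0 q y'; rewrite /M; lra.
have c1 := scale_lim_ge1; pose eta := del / (4 + M + 2 * c).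
have eta0 : 0 < eta by apply: Rdiv_lt_0_compat; lra.
have eta_del : eta * (4 + M + 2 * c) = del by rewrite /eta; field; lra.
have [n [[[[Ea [xa [ay _]]] [Ea' [xa' [ay' _]]]] [[ab ab'] [sc epsn]]] [[ga ga'] approx]]] :=
  filter_ex (filterI (filterI (filterI (approx_preimP y) (approx_preimP y'))
    (filterI (filterI (approx_preim_bounded y) (approx_preim_bounded y'))
      (filterI (scale_near_lim _ eta0) (eps_small _ eta0))))
    (filterI (filterI (lim_mapP y _ eta0) (lim_mapP y' _ eta0)) phi_approx)).
set a := approx_preim n y in Ea xa ay ab ga; set a' := approx_preim n y' in Ea' xa' ay' ab' ga'.
have /Rabs_def2 distD := proj1 (proj2 approx) a a' Ea Ea' xa xa'.
have DM : edist a a' <= M.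
  by have := edist_triangle a x a'; rewrite (edist_sym a x) /M; lra.
have DD' : - (2 * eta) < edist a a' - edist (lim_map y) (lim_map y') < 2 * eta.
  have := edist_triangle4 a (lim_map y) (lim_map y') a'.
  have := edist_triangle4 (lim_map y) a a' (lim_map y').
  by rewrite (edist_sym (lim_map y')) (edist_sym (lim_map y) a); lra.
have sD : - (eta * M) <= (s n - c) * edist a a' <= eta * M.
  by have := edist_ge0 a a'; split; nra.
have cD : - (c * (2 * eta)) <= c * (edist a a' - edist (lim_map y) (lim_map y')) <= c * (2 * eta).
  by split; nra.
have := mdist_tri4 y (phi n a) (phi n a') y'; have := mdist_tri4 (phi n a) y y' (phi n a').
rewrite (mdist_sym y (phi n a)) (mdist_sym y' (phi n a')) => t1 t2.
by apply: Rabs_def1; lra.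
Qed.

Lemma lim_map_near y del : 0 < del ->
  \forall n \near U, exists z, E n z /\ edist (lim_map y) z < del.
Proof.
move=> del0; apply: filterS2 (approx_preimP y) (lim_mapP y _ del0) => n [Ea _] ga.
by exists (approx_preim n y); rewrite edist_sym.
Qed.

Lemma lim_map_of_ucvg (b : nat -> pt N) z :
  (\forall n \near U, E n (b n)) -> ucvg U (@edist N) b z -> exists y, lim_map y = z.
Proof.
move=> Eb bz; pose B := (c + 1) * (edist x z + 1).
have B0 : 0 <= B by have := scale_lim_ge1; have := edist_ge0 x z; rewrite /B; nra.
have xb : \forall n \near U, s n * edist x (b n) <= B.
  apply: (filterS3 _ _ (bz _ Rlt_0_1) (scale_near_lim _ Rlt_0_1) s_ge1) => n bnz sn sn1.
  have := edist_triangle x z (b n); rewrite (edist_sym z); have := edist_ge0 x (b n).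
  by rewrite /B; nra.
have near_ball : \forall n \near U, E n (b n) /\ 0 < rho n /\
    s n * edist x (b n) < rho n /\
    pGH_approx (E n) (fun a b => s n * edist a b) x q (phi n) (rho n) (eps n).
  apply: (filterS3 _ _ (filterI Eb xb) (rho_big B) phi_approx) => n [Ebn xbn] rhon.
  by do !split => //; lra.
have [y yP] : exists y, ucvg U (@mdist Y) (fun n => phi n (b n)) y.
  apply: (ucvg_proper U_ultra HY _ q (B + 1)).
  apply: (filterS3 _ _ near_ball xb (eps_small _ Rlt_0_1)) => n [Ebn [rho0 [xbn approx]]] xbB eps1.
  by have /Rabs_def2 := approx_base_dist _ approx rho0 Ebn xbn; lra.
exists y; apply: (ucvg_edist_eq U_ultra (lim_mapP y) bz) => del del0.
have del3 : 0 < del / 3 by lra.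
apply: (filterS3 _ _ (filterI (approx_preimP y) near_ball)
  (filterI (yP _ del3) (eps_small _ del3)) s_ge1).
move=> n [[Ea [xa [ay _]]] [Ebn [_ [xbn approx]]]] [ybn epsn] sn1.
have /Rabs_def2 := proj1 (proj2 approx) _ _ Ea Ebn xa xbn.
have := mdist_tri (phi n (approx_preim n y)) y (phi n (b n)); rewrite (mdist_sym y).
by have := edist_ge0 (approx_preim n y) (b n); nra.
Qed.

Lemma lim_map_onto z :
  (forall del, 0 < del -> exists p, edist z p < del /\ \forall n \near U, E n p) ->
  exists y, lim_map y = z.
Proof.
move=> z_lim; have inv_pos i : 0 < / INR i.+1.
  by apply: Rinv_0_lt_compat; apply: lt_0_INR; lia.
have [p pP] := choice (fun i => z_lim _ (inv_pos i)).
have [I IP] := near_diagonal U_ultra U_free _ (fun i => proj2 (pP i)).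
apply: (lim_map_of_ucvg (fun n => p (I n))).
  by apply: filterS (IP 0%N) => n [].
move=> del del0; have [K Kinv] := inv_INR_small _ del0.
apply: filterS (IP K) => n [KI _]; rewrite edist_sym.
exact: Rlt_trans (proj1 (pP (I n))) (Kinv _ KI).
Qed.

Lemma limit_dilation : exists g : Y -> pt N,
  [/\ g q = x, forall y y', mdist y y' = c * edist (g y) (g y'),
      forall y del, 0 < del -> \forall n \near U, exists z, E n z /\ edist (g y) z < del
    & forall z, (forall del, 0 < del -> exists p, edist z p < del /\ \forall n \near U, E n p) ->
      exists y, g y = z].
Proof.
by exists lim_map; split; [exact: lim_map_base | exact: lim_map_dilation
  | exact: lim_map_near | exact: lim_map_onto].
Qed.

End LimitMap.

Lemma exists_threshold (P : nat -> Prop) K : P 0%N -> ~ P K -> exists k, P k /\ ~ P k.+1.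
Proof.
move=> P0 PK; apply: NNPP => nok; apply: PK.
by elim: K => // k IH; apply: NNPP => Pk1; apply: nok; exists k.
Qed.

Lemma scale_decomposition r t : 0 < r < 1 -> 1 <= t ->
  exists k, (/ r) ^ k <= t < (/ r) ^ k.+1.
Proof.
move=> r01 t1; have [K rK] := geometric_small _ _ _ (conj (Rlt_le _ _ (proj1 r01)) (proj2 r01))
  (Rle_trans _ _ _ Rle_0_1 t1) Rlt_0_1.
have rK0 : 0 < r ^ K by apply: pow_lt; lra.
have [k [tk tk1]] : exists k, (/ r) ^ k <= t /\ ~ (/ r) ^ k.+1 <= t.
  apply: (exists_threshold _ K) => //.
  rewrite pow_inv => /(Rmult_le_compat_l (r ^ K) _ _ (Rlt_le _ _ rK0)).
  by rewrite Rinv_r; have := rK K (leqnn K); lra.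
by exists k; split => //; apply: Rnot_le_lt.
Qed.

Lemma scaled_bounds r t k : 0 < r -> (/ r) ^ k <= t < (/ r) ^ k.+1 -> 1 <= t * r ^ k < / r.
Proof.
move=> r0 [tk tk1]; have rk0 : 0 < r ^ k by apply: pow_lt.
rewrite pow_inv in tk; rewrite /= pow_inv in tk1; split.
  have := Rmult_le_compat_r (r ^ k) _ _ (Rlt_le _ _ rk0) tk.
  by rewrite Rinv_l; lra.
apply: (Rmult_lt_reg_r (/ r ^ k)); first exact: Rinv_0_lt_compat.
by rewrite Rmult_assoc Rinv_r; lra.
Qed.

Lemma scale_normalization {U : set_system nat} (r : R) (t : nat -> R) :
  Filter U -> 0 < r < 1 -> (forall M, \forall n \near U, M < t n) ->
  exists k : nat -> nat, (\forall n \near U, 1 <= t n * r ^ k n < / r) /\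
    forall j, \forall n \near U, (j <= k n)%N.
Proof.
move=> U_filter r01 t_big.
have pick n : exists kn, 1 <= t n -> (/ r) ^ kn <= t n < (/ r) ^ kn.+1.
  case: (pselect (1 <= t n)) => [t1|nt1]; last by exists 0%N.
  by have [kn knP] := scale_decomposition _ _ r01 t1; exists kn.
have [k kP] := choice pick; exists k; split => [|j].
  by apply: filterS (t_big 1) => n /Rlt_le /kP; apply: scaled_bounds; lra.
apply: filterS2 (t_big 1) (t_big ((/ r) ^ j)) => n /Rlt_le /kP [_ tk] tj.
rewrite leqNgt; apply/negP => kj.
have r_inv1 : 1 <= / r by rewrite -Rinv_1; apply: Rinv_le_contravar; lra.
by have := Rle_pow (/ r) _ _ r_inv1 (elimT leP kj); lra.
Qed.

Lemma proper_uniform_density {N} {Y : metric_space} (HY : proper_space Y) (q : Y)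
    (g : Y -> pt N) (A : nat -> pt N -> Prop) c :
  0 < c -> (forall y y', mdist y y' = c * edist (g y) (g y')) ->
  (forall m n z, (m <= n)%N -> A m z -> A n z) ->
  (forall y del, 0 < del -> exists n p, A n p /\ edist (g y) p < del) ->
  forall rad del, 0 < del -> exists n0, forall n, (n0 <= n)%N ->
    forall y, mdist q y <= rad -> exists p, A n p /\ edist (g y) p < del.
Proof.
move=> c0 g_dil A_mono g_dense rad del del0; apply: NNPP => nonunif.
have bad n : exists y, mdist q y <= rad /\ forall p, A n p -> del <= edist (g y) p.
  apply: NNPP => nobad; apply: nonunif; exists n => m nm y qy; apply: NNPP => noap.
  apply: nobad; exists y; split => // p Amp; apply: Rnot_lt_le => gp.
  by apply: noap; exists p; split => //; apply: A_mono Amp.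
have [y yP] := choice bad.
have [phi [l [phiS yl]]] := HY q rad y (fun n => proj1 (yP n)).
have [j [p [Ajp lp]]] := g_dense l (del / 2) ltac:(lra).
have [K Kl] := yl (c * (del / 2)) ltac:(nra).
pose n := phi (maxn K j).
have Anp : A n p := A_mono _ _ _ (leq_trans (leq_maxr K j) (strict_mono_ge _ phiS _)) Ajp.
have := proj2 (yP n) p Anp; have := Kl _ (leq_maxl K j); rewrite g_dil -/n.
by have := edist_triangle (g (y n)) (g l) p; nra.
Qed.

Lemma Zset_of_iter {N} {w : pt N -> pt N} {F : pt N -> Prop} {n p} :
  F (iter n w p) -> Zset w F p.
Proof. by move=> Fp eps eps0; exists p; split; [exists n | rewrite edist_xx]. Qed.

Section TangentCone.
Context {N : nat} {w : pt N -> pt N} {r : R} {x : pt N} {F : pt N -> Prop}.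
Hypotheses (r01 : 0 < r < 1) (w_sim : forall a b, edist (w a) (w b) = r * edist a b)
  (w_onto : forall p, exists z, w z = p) (wx : w x = x)
  (Fw : forall z, F z -> F (w z)) (Fx : F x).

Lemma pGH_approx_iter {Y : metric_space} (q : Y) t n f rho eps :
  pGH_approx F (fun a b => t * edist a b) x q f rho eps ->
  pGH_approx (fun z => F (iter n w z)) (fun a b => t * r ^ n * edist a b) x q
    (fun a => f (iter n w a)) rho eps.
Proof.
have -> : (fun a b => t * r ^ n * edist a b) = (fun a b => t * edist (iter n w a) (iter n w b)).
  by do 2!apply: functional_extensionality => ?; rewrite (edist_iter w_sim); ring.
rewrite -{1}(iter_fix n wx) => approx.
exact: (pGH_approx_pullback _ (fun a _ => iter_surjective _ w_onto n a) approx).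
Qed.

Lemma tangent_set_is_dilation {U} : UltraFilter U -> (forall j, \forall n \near U, (j <= n)%N) ->
  forall (Y : metric_space) (q : Y), tangent_set F x q ->
  exists c, 0 < c /\ pointed_isometric_to_dilation (Zset w F) x c q.
Proof.
move=> U_ultra U_free Y q [HY [t [t_big conv]]].
have [rho [eps [f [rho_big [eps_small f_approx]]]]] := pGH_conv_diagonal U_ultra U_free conv.
have t_large M : \forall n \near U, M < t n.
  by apply: (near_eventually U_ultra U_free); apply: t_big.
have [k [s_bounds k_big]] := scale_normalization _ _ _ r01 t_large.
pose s n := t n * r ^ k n.
have [c s_to_c] : exists c, ucvg U (fun a b => Rabs (a - b)) s c.
  apply: (ucvg_real U_ultra _ (/ r)); apply: filterS s_bounds => n sn.
  by rewrite /s Rabs_pos_eq; lra.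
pose E n z := F (iter (k n) w z); pose phi n a := f n (iter (k n) w a).
have phi_approx : \forall n \near U,
    pGH_approx (E n) (fun a b => s n * edist a b) x q (phi n) (rho n) (eps n).
  by apply: filterS f_approx => n; apply: pGH_approx_iter.
have E_x n : E n x by rewrite /E iter_fix.
have s_ge1 : \forall n \near U, 1 <= s n by apply: filterS s_bounds => n [].
have [g [gq g_dil g_near g_onto]] :=
  limit_dilation U_ultra U_free HY E_x s_ge1 s_to_c rho_big eps_small phi_approx.
exists c; split; first by have := scale_lim_ge1 U_ultra s_ge1 s_to_c; lra.
exists g; split => //; split => [y del del0|]; last split => [z Zz|//].
  by have [n [z [Ez gz]]] := filter_ex (g_near y del del0); exists z; split; [exists (k n)|].
apply: g_onto => del del0; have [p [[j Fp] zp]] := Zz del del0.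
exists p; split => //; apply: filterS (k_big j) => n jk.
exact: iter_invariant Fw j (k n) p jk Fp.
Qed.

Lemma dilation_is_tangent_set (Y : metric_space) (q : Y) : proper_space Y ->
  (exists c, 0 < c /\ pointed_isometric_to_dilation (Zset w F) x c q) -> tangent_set F x q.
Proof.
move=> HY [c [c0 [g [gq [gZ [g_onto g_dil]]]]]].
have r0 : 0 < r by case: r01.
split => //; exists (fun n => c * (/ r) ^ n); split; first exact: geometric_unbounded.
move=> rad eps rad0 eps0.
have g_dense y del : 0 < del -> exists n p, F (iter n w p) /\ edist (g y) p < del.
  by move=> del0; have [p [[n Fp] yp]] := gZ y del del0; exists n, p.
have [n0 unif] := proper_uniform_density HY q g (fun n p => F (iter n w p)) _ c0 g_dil
  (iter_invariant Fw) g_dense rad _ (Rdiv_lt_0_compat _ _ eps0 c0).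
exists n0 => n n0n.
have lift a : exists y, F a -> iter n w (g y) = a.
  case: (pselect (F a)) => [Fa|nFa]; last by exists q => /nFa.
  have [z za] := iter_surjective _ w_onto n a; rewrite -za in Fa *.
  by have [y gy] := g_onto z (Zset_of_iter Fa); exists y; rewrite gy.
have [f fP] := choice lift.
have rn0 : 0 < r ^ n by apply: pow_lt.
have dist_f a b : F a -> F b -> mdist (f a) (f b) = c * (/ r) ^ n * edist a b.
  move=> Fa Fb; rewrite g_dil -{2}(fP a Fa) -{2}(fP b Fb) (edist_iter w_sim) pow_inv.
  by field; lra.
have fx : f x = q.
  have gfx : g (f x) = x by apply: (iter_injective r0 w_sim n); rewrite fP // iter_fix.
  by apply/(mdist_eq0 (f x) q); rewrite g_dil gfx gq edist_xx Rmult_0_r.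
exists f; split; [exact: fx | split => [a b Fa Fb _ _|y qy]].
  by rewrite dist_f // Rminus_diag Rabs_R0.
have [p [Fp yp]] := unif n n0n y ltac:(lra).
have gfp : g (f (iter n w p)) = p by apply: (iter_injective r0 w_sim n); rewrite fP.
have cyp : c * edist (g y) p < eps.
  have : c * (eps / c) = eps by field; lra.
  by have := Rmult_lt_compat_l c _ _ c0 yp; lra.
exists (iter n w p); split => //; split.
  rewrite -dist_f // fx g_dil gfp.
  by have := edist_triangle x (g y) p; have := g_dil q y; rewrite gq; nra.
by rewrite g_dil gfp edist_sym.
Qed.

End TangentCone.

Lemma free_ultrafilter_nat :
  exists U : set_system nat, UltraFilter U /\ forall j, \forall n \near U, (j <= n)%N.
Proof.
have [U [U_ultra evU]] := ultraFilterLemma (@eventually_filter).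
by exists U; split => // j; apply: evU; exists j.
Qed.

Theorem theorem2p6 (N m : nat) (ws : 'I_m -> pt N -> pt N) (F : pt N -> Prop)
  (Hsim : forall i, contracting_similarity (ws i))
  (HF : is_attractor ws F)
  (k : 'I_m) (x : pt N) (Hx : ws k x = x) :
  forall (Y : metric_space) (q : Y),
    tangent_set F x q <->
    (proper_space Y /\ exists c : R, 0 < c /\
       pointed_isometric_to_dilation (Zset (ws k) F) x c q).
Proof.
have [U [U_ultra U_free]] := free_ultrafilter_nat.
have [r [r01 w_sim]] := Hsim k; have r0 := proj1 r01.
have [F_ne [F_cpt F_eq]] := HF.
have Fw z : F z -> F (ws k z) by move=> Fz; apply/F_eq; exists k, z.
have Fx : F x := fixed_point_mem r0 w_sim (proj2 r01) Hx F_ne F_cpt Fw.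
have w_onto := similarity_surjective r0 w_sim U_ultra U_free _ Hx.
move=> Y q; split => [tan | [HY dil]].
  split; first by case: tan.
  exact: (tangent_set_is_dilation r01 w_sim w_onto Hx Fw Fx U_ultra U_free _ _ tan).
exact: (dilation_is_tangent_set r01 w_sim w_onto Hx Fw Fx _ _ HY dil).
Qed.
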